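(* The following identities hold: \begin{align*}\sum_{k=1}^\infty\frac{11319k^2-497k-746}{(4k+1)(-2)^k\binom{4k}k}&=48\log2-246, \\\sum_{k=1}^\infty\frac{39083k^2-2829k-3106}{(4k+1)(-24)^k\binom{4k}k}&=-94-64\log\frac23, \\\sum_{k=1}^\infty\frac{442611k^2+41347k-17434}{(4k+1)(-192)^k\binom{4k}k}&=26+512\log\frac34. \end{align*} *)

From Stdlib Require Import Reals.
From Coquelicot Require Import Coquelicot.
Open Scope R_scope.

Definition term (a b c q : R) (k : nat) : R :=
  (a * INR k ^ 2 + b * INR k + c) /
  ((4 * INR k + 1) * q ^ k * Binomial.C (4 * k)%nat k).

From Stdlib Require Import Reals Lra Lia Factorial ssreflect.
From Coquelicot Require Import Coquelicot.
Open Scope R_scope.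

(* Since the Beta integral of x^(3k) (1-x)^k over [0,1] is k! (3k)! / (4k+1)!
   = 1 / ((4k+1) C(4k,k)), the k-th summand is the integral of P(k) t(x)^k with
   t(x) = x^3 (1-x) / q.  Summing the quadratic-times-geometric series in closed
   form turns each identity into the integral of a rational function of x, which
   an explicit primitive evaluates.  Sum and integral may be swapped because
   |t| <= 1/8 on [0,1] when q <= -2, so the tails are uniformly O(N^2 8^-N). *)

Lemma is_RInt_derive_01 (F f : R -> R) :
  (forall x, 0 <= x <= 1 -> is_derive F x (f x)) ->
  (forall x, 0 <= x <= 1 -> continuous f x) ->
  is_RInt f 0 1 (F 1 - F 0).
Proof.
move=> dF cf; apply: (@is_RInt_derive R_CompleteNormedModule) => x;
  rewrite Rmin_left ?Rmax_right; try lra; [exact: dF | exact: cf].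
Qed.

Lemma is_RInt_sum_n (f : nat -> R -> R) (v : nat -> R) (a b : R) (N : nat) :
  (forall n, is_RInt (f n) a b (v n)) ->
  is_RInt (fun x => sum_n (fun n => f n x) N) a b (sum_n v N).
Proof.
move=> fv; elim: N => [|N IH].
- rewrite sum_O; eapply is_RInt_ext; last exact: fv 0%nat.
  by move=> x _; rewrite sum_O.
- rewrite sum_Sn; eapply is_RInt_ext; last exact: is_RInt_plus _ _ _ _ _ _ IH (fv (S N)).
  by move=> x _; rewrite sum_Sn.
Qed.

Lemma is_series_geom_error (u : nat -> R) (V C r : R) :
  0 <= r < 1 -> (forall N, Rabs (V - sum_n u N) <= C * r ^ N) -> is_series u V.
Proof.
move=> hr err.
have geom : is_lim_seq (fun N => C * r ^ N) 0.
{ have hr1 : Rabs r < 1 by rewrite Rabs_pos_eq; lra.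
  have := is_lim_seq_scal_l _ C _ (is_lim_seq_geom r hr1).
  by rewrite /= Rmult_0_r. }
change (is_lim_seq (sum_n u) V).
apply: (is_lim_seq_le_le (fun N => V - C * r ^ N) _ (fun N => V + C * r ^ N)).
- move=> N; have := err N; rewrite Rabs_le_between; lra.
- rewrite -[X in is_lim_seq _ (Finite X)]Rminus_0_r.
  exact: is_lim_seq_minus' (is_lim_seq_const V) geom.
- rewrite -[X in is_lim_seq _ (Finite X)]Rplus_0_r.
  exact: is_lim_seq_plus' (is_lim_seq_const V) geom.
Qed.

Lemma is_RInt_beta (m n : nat) :
  is_RInt (fun x => x ^ m * (1 - x) ^ n) 0 1
    (INR (fact m) * INR (fact n) / INR (fact (m + n + 1))).
Proof.
have Sm_neq0 (k : nat) : INR (S k) <> 0 by apply: not_0_INR.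
elim: n m => [|n IH] m.
- apply: (is_RInt_ext (fun x => x ^ m)) => [x _|]; first by rewrite /= Rmult_1_r.
  have -> : INR (fact m) * INR (fact 0) / INR (fact (m + 0 + 1))
          = 1 ^ S m / INR (S m) - 0 ^ S m / INR (S m).
  { rewrite pow1 pow_i; last lia.
    rewrite Nat.add_0_r Nat.add_1_r fact_simpl mult_INR /=.
    field; split; [exact: Sm_neq0 | exact: INR_fact_neq_0]. }
  apply: (is_RInt_derive_01 (fun x => x ^ S m / INR (S m))) => x _.
  + auto_derive; first done.
    by rewrite -/(INR (S m)); field; apply: Sm_neq0.
  + by apply: ex_derive_continuous; auto_derive.
- have ibp : is_RInt (fun x => INR (S m) * (x ^ m * (1 - x) ^ S n)
                             - INR (S n) * (x ^ S m * (1 - x) ^ n)) 0 1 0.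
  { have boundary : 1 ^ S m * (1 - 1) ^ S n - 0 ^ S m * (1 - 0) ^ S n = 0.
      by rewrite Rminus_diag !pow_i; try lia; ring.
    rewrite -[X in is_RInt _ _ _ X]boundary.
    apply: (is_RInt_derive_01 (fun x => x ^ S m * (1 - x) ^ S n)) => x _.
    + auto_derive; first done.
      rewrite /= -/(INR (S m)) -/(INR (S n)) -/(1 - x); ring.
    + by apply: ex_derive_continuous; auto_derive. }
  have H := is_RInt_scal _ _ _ (/ INR (S m)) _
    (is_RInt_plus _ _ _ _ _ _ ibp (is_RInt_scal _ _ _ (INR (S n)) _ (IH (S m)))).
  have -> : INR (fact m) * INR (fact (S n)) / INR (fact (m + S n + 1))
          = / INR (S m) * (0 + INR (S n)
              * (INR (fact (S m)) * INR (fact n) / INR (fact (S m + n + 1)))).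
  { replace (m + S n + 1)%nat with (S m + n + 1)%nat by lia.
    rewrite !fact_simpl !mult_INR.
    field; repeat split; (apply: INR_fact_neq_0 || apply: Sm_neq0). }
  eapply is_RInt_ext; last exact: H.
  move=> x _; rewrite /scal /plus /= /mult /=.
  by field; apply: Sm_neq0.
Qed.

Lemma is_RInt_pow_quartic (k : nat) :
  is_RInt (fun x => (x ^ 3 * (1 - x)) ^ k) 0 1
    (/ ((4 * INR k + 1) * Binomial.C (4 * k) k)).
Proof.
apply: (is_RInt_ext (fun x => x ^ (3 * k) * (1 - x) ^ k)).
  by move=> x _; rewrite pow_mult Rpow_mult_distr.
have -> : / ((4 * INR k + 1) * Binomial.C (4 * k) k)
        = INR (fact (3 * k)) * INR (fact k) / INR (fact (3 * k + k + 1)).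
{ rewrite /Binomial.C.
  replace (4 * k - k)%nat with (3 * k)%nat by lia.
  replace (3 * k + k + 1)%nat with (S (4 * k)) by lia.
  rewrite fact_simpl mult_INR S_INR mult_INR.
  have -> : INR 4 = 4 by rewrite /=; ring.
  have := pos_INR k; have := INR_fact_neq_0 k; have := INR_fact_neq_0 (3 * k);
    have := INR_fact_neq_0 (4 * k).
  move=> *; field; repeat split; try done; lra. }
exact: is_RInt_beta.
Qed.

Definition quad (a b c m : R) : R := a * m ^ 2 + b * m + c.

Definition kernel (q x : R) : R := x ^ 3 * (1 - x) / q.

Lemma is_RInt_term (a b c q : R) (k : nat) : q <> 0 ->
  is_RInt (fun x => quad a b c (INR k) * kernel q x ^ k) 0 1 (term a b c q k).
Proof.
move=> q_neq0; have qk_neq0 := pow_nonzero q k q_neq0.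
have H := is_RInt_scal _ _ _ (quad a b c (INR k) / q ^ k) _ (is_RInt_pow_quartic k).
have -> : term a b c q k
        = quad a b c (INR k) / q ^ k * / ((4 * INR k + 1) * Binomial.C (4 * k) k).
  by rewrite /term /quad /Rdiv !Rinv_mult; ring.
eapply is_RInt_ext; last exact: H.
move=> x _; rewrite /kernel /Rdiv !Rpow_mult_distr pow_inv /scal /= /mult /=; ring.
Qed.

(* For |t| < 1 this is the tail sum over k > N of quad(k) t^k: multiplying that
   sum by (1 - t)^3 leaves three terms, since third differences of a quadratic
   vanish. *)
Definition quad_tail (a b c : R) (N : nat) (t : R) : R :=
  t ^ S N * (quad a b c (INR N + 1)
             + (quad a b c (INR N + 2) - 3 * quad a b c (INR N + 1)) * t
             + quad a b c (INR N) * t ^ 2) / (1 - t) ^ 3.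

Lemma quad_tail_S (a b c : R) (N : nat) (t : R) : t <> 1 ->
  quad_tail a b c N t = quad a b c (INR (S N)) * t ^ S N + quad_tail a b c (S N) t.
Proof.
move=> t_neq1; have : 1 - t <> 0 by lra.
rewrite /quad_tail /quad !S_INR /=; move=> ?; field; auto.
Qed.

Lemma sum_n_quad_geom (a b c : R) (N : nat) (t : R) : t <> 1 ->
  sum_n (fun n => quad a b c (INR (S n)) * t ^ S n) N
  = quad_tail a b c 0 t - quad_tail a b c (S N) t :> R.
Proof.
move=> t_neq1; elim: N => [|N IH].
- by rewrite sum_O (quad_tail_S _ _ _ 0) //; ring.
- rewrite sum_Sn IH (quad_tail_S _ _ _ (S N)) //; rewrite /plus /=; ring.
Qed.

Lemma Rabs_quad_le (a b c m B : R) : 0 <= m <= B -> 1 <= B ->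
  Rabs (quad a b c m) <= (Rabs a + Rabs b + Rabs c) * B ^ 2.
Proof.
move=> hm hB; rewrite /quad.
have ha : Rabs (a * m ^ 2) <= Rabs a * B ^ 2.
{ rewrite Rabs_mult (Rabs_pos_eq (m ^ 2)); last nra.
  apply: Rmult_le_compat_l; [exact: Rabs_pos | nra]. }
have hb : Rabs (b * m) <= Rabs b * B ^ 2.
{ rewrite Rabs_mult (Rabs_pos_eq m); last lra.
  apply: Rmult_le_compat_l; [exact: Rabs_pos | nra]. }
have hc : Rabs c <= Rabs c * B ^ 2.
{ have : 1 <= B ^ 2 by nra.
  have := Rabs_pos c; nra. }
have := Rabs_triang (a * m ^ 2 + b * m) c.
have := Rabs_triang (a * m ^ 2) (b * m).
lra.
Qed.

Lemma Rabs_quad_tail_le (a b c : R) (N : nat) (t : R) : -1 <= t <= 0 ->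
  Rabs (quad_tail a b c N t)
  <= Rabs t ^ N * (6 * ((Rabs a + Rabs b + Rabs c) * (INR N + 2) ^ 2)).
Proof.
move=> ht; set K := 6 * _.
have hN := pos_INR N.
have hq m : 0 <= m <= INR N + 2 ->
    Rabs (quad a b c m) <= (Rabs a + Rabs b + Rabs c) * (INR N + 2) ^ 2.
  by move=> hm; apply: Rabs_quad_le; lra.
have h0 := hq (INR N + 1) ltac:(lra).
have h1 := hq (INR N + 2) ltac:(lra).
have h2 := hq (INR N) ltac:(lra).
rewrite /quad_tail.
set p0 := quad a b c (INR N + 1) in h0 *; set p1 := quad a b c (INR N + 2) in h1 *.
set p2 := quad a b c (INR N) in h2 *.
have abs_t : 0 <= Rabs t <= 1 by split_Rabs; lra.
have num : Rabs (p0 + (p1 - 3 * p0) * t + p2 * t ^ 2) <= K.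
{ have := Rabs_triang (p0 + (p1 - 3 * p0) * t) (p2 * t ^ 2).
  have := Rabs_triang p0 ((p1 - 3 * p0) * t).
  have : Rabs (p1 - 3 * p0) <= Rabs p1 + 3 * Rabs p0 by split_Rabs; lra.
  rewrite (Rabs_mult _ t) (Rabs_mult p2) (Rabs_pos_eq (t ^ 2)); last nra.
  have : t ^ 2 <= 1 by nra.
  have := Rabs_pos p0; have := Rabs_pos p2; have := Rabs_pos (p1 - 3 * p0).
  rewrite /K; nra. }
have den : 0 < / (1 - t) ^ 3 <= 1.
{ have h : 1 <= (1 - t) ^ 3 by nra.
  split; first by apply: Rinv_0_lt_compat; lra.
  by rewrite -[X in _ <= X]Rinv_1; apply: Rinv_le_contravar; lra. }
rewrite Rdiv_def Rabs_mult (Rabs_pos_eq (/ _)); last lra.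
rewrite Rabs_mult -tech_pow_Rmult Rabs_mult -RPow_abs.
set T := Rabs t ^ N; set X := Rabs (_ + _ + _) in num *.
have hT : 0 <= T by apply: pow_le; lra.
have hX : 0 <= X by exact: Rabs_pos.
have numerator_le : Rabs t * T * X <= T * K.
  by apply: Rmult_le_compat; nra.
have denominator_le : Rabs t * T * X * / (1 - t) ^ 3 <= Rabs t * T * X.
{ have : 0 <= Rabs t * T * X by apply: Rmult_le_pos; nra.
  nra. }
lra.
Qed.

Lemma sq_le_pow4 (N : nat) : (INR N + 3) ^ 2 <= 9 * 4 ^ N.
Proof.
elim: N => [|N IH]; first by rewrite /=; lra.
rewrite S_INR /=; rewrite /= in IH; have := pos_INR N; nra.
Qed.

Lemma Rabs_quad_tail_S_le (a b c : R) (N : nat) (t : R) : -1/8 <= t <= 0 ->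
  Rabs (quad_tail a b c (S N) t) <= 7 * (Rabs a + Rabs b + Rabs c) * (1/2) ^ N.
Proof.
move=> ht; set M := Rabs a + Rabs b + Rabs c.
have hM : 0 <= M by rewrite /M; have := Rabs_pos a; have := Rabs_pos b; have := Rabs_pos c; lra.
apply: Rle_trans (Rabs_quad_tail_le a b c (S N) t ltac:(lra)) _.
have -> : INR (S N) + 2 = INR N + 3 by rewrite S_INR; ring.
rewrite -/M.
have ht8 : Rabs t ^ S N <= (1/8) ^ S N by apply: pow_incr; split_Rabs; lra.
have h8 : 0 <= (1/8) ^ S N by apply: pow_le; lra.
have hsq := sq_le_pow4 N.
have geom : (1/8) ^ S N * 4 ^ N = / 8 * (1/2) ^ N.
  by rewrite /= Rmult_assoc -Rpow_mult_distr (_ : 1/8 * 4 = 1/2); field.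
have h2 : 0 <= (1/2) ^ N by apply: pow_le; lra.
apply: (Rle_trans _ ((1/8) ^ S N * (6 * (M * (9 * 4 ^ N))))).
- apply: Rmult_le_compat; try nra.
  + apply: pow_le; exact: Rabs_pos.
  + by have := pow2_ge_0 (INR N + 3); nra.
- have -> : (1/8) ^ S N * (6 * (M * (9 * 4 ^ N))) = 54 * M * ((1/8) ^ S N * 4 ^ N).
    by ring.
  rewrite geom; nra.
Qed.

Lemma kernel_bounds (q x : R) : q <= -2 -> 0 <= x <= 1 -> -1/8 <= kernel q x <= 0.
Proof.
move=> hq hx; rewrite /kernel.
have hu : 0 <= x ^ 3 * (1 - x) <= 1/4.
{ have h1 : 0 <= x * (1 - x) <= 1/4.
    split; first by apply: Rmult_le_pos; lra.
    by have := pow2_ge_0 (x - 1/2); nra.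
  have h2 : 0 <= x * x <= 1 by nra.
  have -> : x ^ 3 * (1 - x) = x * x * (x * (1 - x)) by ring.
  nra. }
have hinv : 0 < / - q <= 1/2.
{ split; first by apply: Rinv_0_lt_compat; lra.
  have -> : 1/2 = /2 by field.
  apply: Rinv_le_contravar; lra. }
have -> : x ^ 3 * (1 - x) / q = - (x ^ 3 * (1 - x) * / - q) by field; lra.
nra.
Qed.

Lemma Rabs_RInt_01_le (f : R -> R) (l B : R) :
  (forall x, 0 <= x <= 1 -> Rabs (f x) <= B) -> is_RInt f 0 1 l -> Rabs l <= B.
Proof.
move=> fB fl; have := norm_RInt_le_const_abs f 0 1 l B _ fl.
rewrite Rminus_0_r Rabs_R1 Rmult_1_l; apply.
by move=> x; rewrite Rmin_left ?Rmax_right; try lra; apply: fB.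
Qed.

Lemma is_series_term_of_RInt (a b c q V : R) : q <= -2 ->
  is_RInt (fun x => quad_tail a b c 0 (kernel q x)) 0 1 V ->
  is_series (fun n => term a b c q (S n)) V.
Proof.
move=> hq hV.
apply: (is_series_geom_error _ _ (7 * (Rabs a + Rabs b + Rabs c)) (1/2)); first lra.
move=> N.
have partial := is_RInt_sum_n _ _ 0 1 N (fun n => is_RInt_term a b c q (S n) ltac:(lra)).
have error := is_RInt_minus _ _ _ _ _ _ hV partial.
apply: (Rabs_RInt_01_le (fun x => quad_tail a b c (S N) (kernel q x))); last first.
- eapply is_RInt_ext; last exact: error.
  move=> x; rewrite Rmin_left ?Rmax_right; try lra; move=> hx.
  have hk := kernel_bounds q x hq ltac:(lra).
  rewrite /minus /plus /opp /= sum_n_quad_geom; last lra.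
  ring.
- move=> x hx; exact: Rabs_quad_tail_S_le (kernel_bounds q x hq hx).
Qed.

Lemma continuous_quad_tail_kernel (a b c q x : R) : q <= -2 -> 0 <= x <= 1 ->
  continuous (fun y => quad_tail a b c 0 (kernel q y)) x.
Proof.
move=> hq hx; have := kernel_bounds q x hq hx.
rewrite /quad_tail /kernel => hk.
apply: ex_derive_continuous; auto_derive.
change ((1 - x ^ 3 * (1 - x) / q) ^ 3 <> 0).
by apply: pow_nonzero; lra.
Qed.

Lemma is_series_term_of_primitive (a b c q : R) (F : R -> R) : q <= -2 ->
  (forall x, 0 <= x <= 1 -> is_derive F x (quad_tail a b c 0 (kernel q x))) ->
  is_series (fun n => term a b c q (S n)) (F 1 - F 0).
Proof.
move=> hq dF; apply: is_series_term_of_RInt => //.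
apply: is_RInt_derive_01 => // x hx.
exact: continuous_quad_tail_kernel.
Qed.

Lemma pow_S_le_unit (x : R) (n : nat) : 0 <= x <= 1 -> 0 <= x ^ S n <= x ^ n.
Proof.
move=> hx; have := pow_le x n ltac:(lra).
split; [apply: pow_le; lra | rewrite /=; nra].
Qed.

Lemma unit_interval_powers (x : R) : 0 <= x <= 1 ->
  0 <= x ^ 2 <= x /\ 0 <= x ^ 3 <= x ^ 2 /\ 0 <= x ^ 4 <= x ^ 3.
Proof.
move=> hx; have := pow_S_le_unit x 1 hx; rewrite pow_1 => h2.
by split; [exact: h2 | split; apply: pow_S_le_unit].
Qed.

Ltac side_conditions_on_unit_interval :=
  repeat split;
  first [ apply: Rlt_not_eq; nra | apply: Rgt_not_eq; nra | nra | done ].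

(* The primitives come from partial fractions: the integrand is rational with
   denominator a power of x^4 - x^3 + q, which factors as linear times cubic. *)
Definition primitive2 (x : R) : R :=
  (992 - 3176*x + 96*x^2 + 952*x^3 - 9182*x^4 + 7264*x^5 + 138*x^6 - 60*x^7)
    / (x^4 - x^3 - 2)^2
  + 746 * x + 36 * ln (x + 1) - 12 * ln (2 - 2*x + 2*x^2 - x^3).

Lemma is_derive_primitive2 (x : R) : 0 <= x <= 1 ->
  is_derive primitive2 x (quad_tail 11319 (-497) (-746) 0 (kernel (-2) x)).
Proof.
move=> /unit_interval_powers [h2 [h3 h4]].
rewrite /primitive2; auto_derive; first side_conditions_on_unit_interval.
rewrite /quad_tail /kernel /quad /=.
field; side_conditions_on_unit_interval.
Qed.

Lemma primitive2_increment : primitive2 1 - primitive2 0 = 48 * ln 2 - 246.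
Proof.
rewrite /primitive2.
have -> : 1 + 1 = 2 by ring.
have -> : 0 + 1 = 1 by ring.
have -> : 2 - 2 * 1 + 2 * 1 ^ 2 - 1 ^ 3 = 1 by ring.
have -> : 2 - 2 * 0 + 2 * 0 ^ 2 - 0 ^ 3 = 2 by ring.
rewrite ln_1; field.
Qed.

Definition primitive24 (x : R) : R :=
  (460800 - 1807488*x + 4608*x^2 + 37248*x^3 - 387720*x^4 + 309888*x^5
   + 408*x^6 - 144*x^7) / (x^4 - x^3 - 24)^2
  + 3106 * x + 48 * ln (x + 2) - 16 * ln (12 - 6*x + 3*x^2 - x^3).

Lemma is_derive_primitive24 (x : R) : 0 <= x <= 1 ->
  is_derive primitive24 x (quad_tail 39083 (-2829) (-3106) 0 (kernel (-24) x)).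
Proof.
move=> /unit_interval_powers [h2 [h3 h4]].
rewrite /primitive24; auto_derive; first side_conditions_on_unit_interval.
rewrite /quad_tail /kernel /quad /=.
field; side_conditions_on_unit_interval.
Qed.

Lemma primitive24_increment :
  primitive24 1 - primitive24 0 = -94 - 64 * ln (2/3).
Proof.
rewrite /primitive24.
have -> : 1 + 2 = 3 by ring.
have -> : 0 + 2 = 2 by ring.
have -> : 12 - 6 * 1 + 3 * 1 ^ 2 - 1 ^ 3 = 2 ^ 3 by ring.
have -> : 12 - 6 * 0 + 3 * 0 ^ 2 - 0 ^ 3 = 3 * 2 ^ 2 by ring.
by rewrite ln_mult ?ln_div ?ln_pow /=; lra.
Qed.

Definition primitive192 (x : R) : R :=
  (160432128 - 637968384*x + 589824*x^2 + 1794048*x^3 - 30715968*x^4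
   + 24569856*x^5 + 192*x^6 + 1920*x^7) / (x^4 - x^3 - 192)^2
  + 17434 * x + 384 * ln (4 - x) - 128 * ln (48 + 12*x + 3*x^2 + x^3).

Lemma is_derive_primitive192 (x : R) : 0 <= x <= 1 ->
  is_derive primitive192 x (quad_tail 442611 41347 (-17434) 0 (kernel (-192) x)).
Proof.
move=> /unit_interval_powers [h2 [h3 h4]].
rewrite /primitive192; auto_derive; first side_conditions_on_unit_interval.
rewrite /quad_tail /kernel /quad /=.
field; side_conditions_on_unit_interval.
Qed.

Lemma primitive192_increment :
  primitive192 1 - primitive192 0 = 26 + 512 * ln (3/4).
Proof.
rewrite /primitive192.
have -> : 4 - 1 = 3 by ring.
have -> : 4 - 0 = 2 ^ 2 by ring.
have -> : 48 + 12 * 1 + 3 * 1 ^ 2 + 1 ^ 3 = 2 ^ 6 by ring.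
have -> : 48 + 12 * 0 + 3 * 0 ^ 2 + 0 ^ 3 = 3 * 2 ^ 4 by ring.
have -> : (4 : R) = 2 ^ 2 by ring.
by rewrite ln_mult ?ln_div ?ln_pow /=; lra.
Qed.

Theorem lemma3p3 :
  is_series (fun n => term 11319 (-497) (-746) (-2) (S n)) (48 * ln 2 - 246) /\
  is_series (fun n => term 39083 (-2829) (-3106) (-24) (S n)) (-94 - 64 * ln (2/3)) /\
  is_series (fun n => term 442611 41347 (-17434) (-192) (S n)) (26 + 512 * ln (3/4)).
Proof.
split; [|split].
- rewrite -primitive2_increment.
  apply: is_series_term_of_primitive; [lra | exact: is_derive_primitive2].
- rewrite -primitive24_increment.
  apply: is_series_term_of_primitive; [lra | exact: is_derive_primitive24].
- rewrite -primitive192_increment.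
  apply: is_series_term_of_primitive; [lra | exact: is_derive_primitive192].
Qed.
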